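(* Let $n\ge 2$ and $m_1,\dots,m_n\ge1$ be integers. For $h=1,\dots,n$ let $$|\mathscr{G}_h\rangle=\tfrac{1}{\sqrt2}\Big(|0\rangle\textstyle\bigotimes_{k=2}^{2m_h}|i^h_k\rangle+s_h\,|1\rangle\bigotimes_{k=2}^{2m_h}|\bar i^h_k\rangle\Big)$$ with $i^h_k\in\{0,1\}$ and $s_h\in\{+1,-1\}$, and suppose that either for every $h$ the string $0i^h_2\cdots i^h_{m_h}$ equals $i^h_{m_h+1}\cdots i^h_{2m_h}$, or for every $h$ it equals $\bar i^h_{m_h+1}\cdots\bar i^h_{2m_h}$. Consider $\bigotimes_{h=1}^n|\mathscr{G}_h\rangle$, perform a projective measurement in the GHZ basis (Bell basis when $n=2$, $m_1=m_2=1$) on the first $m_h$ qubits of each state (ordered by $h$), and let $|\mathcal{G}_a\rangle$ be the outcome and $|\mathcal{G}_b\rangle$ the state into which the remaining qubits (the last $m_h$ qubits of each state, ordered by $h$) collapse. If $s_h=+1$ for all $h$, then $|\mathcal{G}_a\rangle$ and $|\mathcal{G}_b\rangle$ are the same. If $s_h=-1$ for all $h$, then $|\mathcal{G}_a\rangle$ and $|\mathcal{G}_b\rangle$ are the same when $n$ is even and different when $n$ is odd.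
   Context: For a bit $b$, $\bar b=1-b$. For $N\ge 2$ qubits, the GHZ basis is the orthonormal basis $\frac{1}{\sqrt2}\big(|0\,b_2\cdots b_N\rangle\pm|1\,\bar b_2\cdots\bar b_N\rangle\big)$, $b_k\in\{0,1\}$; for $N=2$ it is the Bell basis. ''Same'' means equal as quantum states (up to a global phase). *)

From mathcomp Require Import all_boot all_order all_algebra all_field.
Set Implicit Arguments. Unset Strict Implicit. Unset Printing Implicit Defensive.
Import Order.TTheory GRing.Theory Num.Theory.
Local Open Scope ring_scope.

(* A (pure, unnormalized) state on N qubits: amplitude of each bit string
   x = x_1 ... x_N (only strings of length N matter). *)
Definition qstate := seq bool -> algC.

Definition ghz (w : seq bool) (sgn : bool) : qstate :=
  fun x => (sqrtC 2)^-1 * ((x == w)%:R + (-1) ^+ sgn * (x == map negb w)%:R).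

Definition is_ghz_basis_vec (N : nat) (g : qstate) : Prop :=
  exists (b : (N.-1).-tuple bool) (sgn : bool), g = ghz (false :: b) sgn.

Definition norm2 (N : nat) (u : qstate) : algC :=
  \sum_(x : N.-tuple bool) `|u x| ^+ 2.

Definition normalize (N : nat) (u : qstate) : qstate :=
  fun x => (sqrtC (norm2 N u))^-1 * u x.

Definition same_state (N : nat) (u v : qstate) : Prop :=
  exists c : algC, `|c| = 1 /\ forall x : N.-tuple bool, u x = c * v x.

(* Amplitude of the product state (tensor_h G_h) when the first m_h qubits of
   state h are given by the h-th block of a (a = concatenation of blocks of
   sizes m_0, ..., m_{n-1}) and the last m_h qubits by the h-th block of c. *)
Definition joint_amp (n : nat) (m : 'I_n -> nat) (G : 'I_n -> qstate)
    (a c : seq bool) : algC :=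
  let sh := [seq m h | h <- enum 'I_n] in
  \prod_(h < n) G h (nth [::] (reshape sh a) h ++ nth [::] (reshape sh c) h).

(* Unnormalized state of the remaining register (last m_h qubits of each
   state, ordered by h) after the measured register (first m_h qubits of
   each state, ordered by h) is projected onto g. *)
Definition post_state (n : nat) (m : 'I_n -> nat) (G : 'I_n -> qstate)
    (g : qstate) : qstate :=
  fun c => \sum_(a : (\sum_(h < n) m h)%N.-tuple bool)
             (g a)^* * joint_amp m G a c.

From mathcomp Require Import all_boot all_order all_algebra all_field.
From mathcomp Require Import ring.
Import Order.TTheory GRing.Theory Num.Theory.
Set Implicit Arguments. Unset Strict Implicit. Unset Printing Implicit Defensive.
Local Open Scope ring_scope.

(* Write the h-th factor as (|u_h v_h> + s_h |ū_h v̄_h>)/√2 with u_h its first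
   half; the hypothesis says v_h = u_h for all h, or v_h = ū_h for all h.
   Projecting the measured register onto |w> ± |w̄> keeps only the terms of the
   product expansion whose measured blocks spell w or w̄, so the post-measurement
   state vanishes unless every block w_h is u_h or ū_h.  In that case the
   remaining register collapses onto P_1 |w'> ± P_2 |w̄'> with w' = w or w̄ and
   P_1, P_2 the products of the signs s_h over the blocks with w_h ≠ u_h, resp.
   w_h = u_h; the sign ± is exactly that of the outcome, so outcome and
   collapsed state agree iff P_1 = P_2.  This always holds when every s_h = +1;
   when every s_h = -1, P_1 P_2 = (-1)^n and P_1^2 = 1, so it holds iff n is
   even. *)

Section Blocks.

Variables (n : nat) (m : 'I_n -> nat).
Local Notation M := (\sum_(h < n) m h)%N.

Definition block_sizes := [seq m h | h <- enum 'I_n].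

Definition block T (x : seq T) (h : 'I_n) := nth [::] (reshape block_sizes x) h.

Lemma sumn_block_sizes : sumn block_sizes = M.
Proof. by rewrite /block_sizes sumnE big_map big_enum. Qed.

Lemma size_block T (x : seq T) h : size x = M -> size (block x h) = m h.
Proof.
move=> size_x; have sizes : map size (reshape block_sizes x) = block_sizes.
  by apply: reshapeKl; rewrite sumn_block_sizes size_x.
have lt_h : (h < size (reshape block_sizes x))%N.
  by rewrite size_reshape size_map size_enum_ord.
rewrite /block -(nth_map [::] 0%N size lt_h) sizes /block_sizes.
by rewrite (nth_map h) ?size_enum_ord // nth_ord_enum.
Qed.

Lemma block_map T1 T2 (f : T1 -> T2) x h : block (map f x) h = map f (block x h).
Proof. by rewrite /block !nth_reshape map_take map_drop. Qed.

Lemma block_inj T (x y : seq T) : size x = M -> size y = M ->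
  (forall h, block x h = block y h) -> x = y.
Proof.
move=> size_x size_y eq_xy.
rewrite -(@reshapeKr _ block_sizes x) ?sumn_block_sizes ?size_x //.
rewrite -(@reshapeKr _ block_sizes y) ?sumn_block_sizes ?size_y //.
congr flatten; apply: (eq_from_nth (x0 := [::])); first by rewrite !size_reshape.
move=> j; rewrite size_reshape size_map size_enum_ord => lt_j.
exact: (eq_xy (Ordinal lt_j)).
Qed.

Lemma prod_eq_block (R : comPzSemiRingType) (T : eqType) (x y : seq T) :
  size x = M -> size y = M ->
  \prod_(h < n) ((block x h == block y h)%:R : R) = (x == y)%:R.
Proof.
move=> size_x size_y; case: eqP => [->|neq_xy].
  by rewrite big1 // => h _; rewrite eqxx.
have [h neq_h] : exists h, block x h != block y h.
  apply/existsP; apply: contraT; rewrite negb_exists => /forallP eq_h.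
  by case: neq_xy; apply: block_inj => // h; apply/eqP/negbNE.
by rewrite (bigD1 h) //= (negbTE neq_h) mul0r.
Qed.

End Blocks.

Definition flip_if (e : bool) (x : seq bool) := if e then map negb x else x.

Lemma flip_if_negb e x : flip_if e (map negb x) = map negb (flip_if e x).
Proof. by case: e. Qed.

Lemma size_flip_if e x : size (flip_if e x) = size x.
Proof. by case: e; rewrite ?size_map. Qed.

Lemma block_flip_if n (m : 'I_n -> nat) e x h :
  block m (flip_if e x) h = flip_if e (block m x h).
Proof. by case: e; rewrite //= block_map. Qed.

Lemma map_negb_neq (x : seq bool) : x != [::] -> x != map negb x.
Proof. by case: x => // -[] x. Qed.

Lemma eq_map_negb (y u : seq bool) : (map negb y == u) = (y == map negb u).
Proof. by rewrite -(inj_eq (inj_map (can_inj negbK))) (mapK negbK). Qed.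

Lemma ghz_cat u v s y c : size y = size u -> u != map negb u ->
  ghz (u ++ v) s (y ++ c) = (sqrtC 2)^-1 *
    (if y == u then (c == v)%:R
     else if y == map negb u then (-1) ^+ s * (c == map negb v)%:R else 0).
Proof.
move=> size_y neq_u; rewrite /ghz map_cat !eqseq_cat ?size_map //.
case: (y =P u) => [->|_]; first by rewrite (negbTE neq_u) /= mulr0 addr0.
by case: (y == map negb u) => /=; rewrite ?add0r ?mulr0 ?addr0.
Qed.

Lemma ghz_cat_flip_if u e s y c :
  size y = size u -> u != map negb u -> (y == u) || (y == map negb u) ->
  ghz (u ++ flip_if e u) s (y ++ c) =
  (sqrtC 2)^-1 * (-1) ^+ (s && (y != u)) * (c == flip_if e y)%:R.
Proof.
move=> size_y neq_u; rewrite ghz_cat //.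
case: eqP => [->|_] /= y_negu; first by rewrite andbF expr0 mulr1.
by rewrite y_negu andbT (eqP y_negu) flip_if_negb mulrA.
Qed.

Lemma ghz_cat_eq0 u v s y c : size y = size u -> u != map negb u ->
  y != u -> y != map negb u -> ghz (u ++ v) s (y ++ c) = 0.
Proof.
move=> size_y neq_u /negbTE neq_yu /negbTE neq_ynu.
by rewrite ghz_cat // neq_yu neq_ynu mulr0.
Qed.

Lemma conj_ghz w t x : (ghz w t x)^* = ghz w t x.
Proof.
rewrite /ghz rmorphM fmorphV rmorphD rmorphM rmorphXn rmorphN1 !rmorph_nat.
by congr (_^-1 * _); apply: geC0_conj; rewrite sqrtC_ge0 ler0n.
Qed.

Lemma ghz_map_negb w t x : ghz (map negb w) t x = (-1) ^+ t * ghz w t x.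
Proof.
by rewrite /ghz (mapK negbK) [RHS]mulrCA [in RHS]mulrDr signrMK addrC.
Qed.

Lemma sum_tuple_indicator (R : pzSemiRingType) (T : finType) M (w : seq T)
    (F : seq T -> R) :
  size w = M -> \sum_(a : M.-tuple T) (tval a == w)%:R * F a = F w.
Proof.
move=> size_w; have size_w' : size w == M by rewrite size_w.
rewrite (bigD1 (Tuple size_w')) //= eqxx mul1r big1 ?addr0 // => a neq_a.
by rewrite -[tval a == w]/(a == Tuple size_w') (negbTE neq_a) mul0r.
Qed.

Lemma post_state_ghz n (m : 'I_n -> nat) G w t c :
  size w = (\sum_(h < n) m h)%N ->
  post_state m G (ghz w t) c = (sqrtC 2)^-1 *
    (joint_amp m G w c + (-1) ^+ t * joint_amp m G (map negb w) c).
Proof.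
move=> size_w; rewrite /post_state.
under eq_bigr => a _ do rewrite conj_ghz /ghz -mulrA mulrDl -mulrA.
rewrite -mulr_sumr big_split /= -mulr_sumr.
by rewrite !(sum_tuple_indicator (fun a => joint_amp m G a c)) ?size_map.
Qed.

Lemma same_state_ghz_map_negb M v w t :
  same_state M v (ghz (map negb w) t) <-> same_state M v (ghz w t).
Proof.
have norm_sign : `|(-1) ^+ t : algC| = 1 by rewrite normrX normrN1 expr1n.
split=> -[c [norm_c eq_v]]; exists (c * (-1) ^+ t).
  rewrite normrM norm_c norm_sign mulr1; split=> // x.
  by rewrite eq_v ghz_map_negb mulrA.
split; first by rewrite normrM norm_c norm_sign mulr1.
by move=> x; rewrite eq_v ghz_map_negb -mulrA signrMK.
Qed.

Lemma same_state_ghz_flip_if M v e w t :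
  same_state M v (ghz (flip_if e w) t) <-> same_state M v (ghz w t).
Proof. by case: e => //; apply: same_state_ghz_map_negb. Qed.

Section TwoPointState.

Variables (M : nat) (p : qstate) (w : seq bool) (K A B : algC).
Hypothesis size_w : size w = M.
Hypothesis w_neq_negb : w != map negb w.
Hypothesis K_gt0 : 0 < K.
Hypotheses (normA : `|A| = 1) (normB : `|B| = 1).
Hypothesis p_two_point : forall x : M.-tuple bool,
  p x = K * (A * (tval x == w)%:R + B * (tval x == map negb w)%:R).

Lemma sqrt_norm2_two_point : sqrtC (norm2 M p) = K * sqrtC 2.
Proof.
have sq_norm (x : M.-tuple bool) : `|p x| ^+ 2 =
    K ^+ 2 * ((tval x == w)%:R + (tval x == map negb w)%:R).
  rewrite p_two_point normrM exprMn ger0_norm ?ltW //; congr (_ * _).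
  case: eqP => [->|_].
    by rewrite (negbTE w_neq_negb) !mulr0 !addr0 mulr1 normA expr1n.
  case: eqP => _ /=; rewrite mulr0 !add0r ?mulr1 ?normB ?expr1n //.
  by rewrite mulr0 normr0 expr0n.
have sum_indicator v : size v = M ->
    \sum_(x : M.-tuple bool) ((tval x == v)%:R : algC) = 1.
  move=> size_v; under eq_bigr do rewrite -[_%:R]mulr1.
  exact: (sum_tuple_indicator (fun _ => 1)).
rewrite /norm2 (eq_bigr _ (fun x _ => sq_norm x)) -mulr_sumr big_split /=.
rewrite !sum_indicator ?size_map // -[1 + 1](sqrtCK 2) -exprMn sqrCK //.
by rewrite mulr_ge0 ?sqrtC_ge0 ?ler0n ?ltW.
Qed.

Lemma same_state_two_point_ghz t :
  same_state M (normalize M p) (ghz w t) <-> B = A * (-1) ^+ t.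
Proof.
have sqrt2_neq0 : sqrtC 2 != 0 :> algC by rewrite sqrtC_eq0 pnatr_eq0.
have normalize_p (x : M.-tuple bool) : normalize M p x =
    (sqrtC 2)^-1 * (A * (tval x == w)%:R + B * (tval x == map negb w)%:R).
  rewrite /normalize sqrt_norm2_two_point p_two_point invfM -mulrA.
  by rewrite mulrCA mulKf ?gt_eqF.
split=> [[c [_ eq_c]] | eq_B]; last first.
  by exists A; split=> // x; rewrite normalize_p eq_B /ghz; ring.
have size_w' : size w == M by rewrite size_w.
have size_nw : size (map negb w) == M by rewrite size_map size_w.
have := eq_c (Tuple size_w'); have := eq_c (Tuple size_nw).
rewrite !normalize_p /ghz /= eqxx eq_sym (negbTE w_neq_negb) eqxx /=.
rewrite !(mulr0, add0r, addr0) !mulr1 mulrCA [c * _]mulrC.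
by move=> /(mulfI (invr_neq0 sqrt2_neq0)) -> /(mulfI (invr_neq0 sqrt2_neq0)) ->.
Qed.

End TwoPointState.

Lemma norm_prod_sign (R : numDomainType) (I : finType) (f : I -> nat) :
  `|\prod_(i : I) ((-1) ^+ f i : R)| = 1.
Proof. by rewrite normr_prod big1 // => i _; rewrite normrX normrN1 expr1n. Qed.

Lemma prod_sign_negb_eq (R : numDomainType) n (t : 'I_n -> bool) :
  \prod_(h < n) ((-1) ^+ (~~ t h) : R) = \prod_(h < n) (-1) ^+ t h <-> ~~ odd n.
Proof.
have prod_all : \prod_(h < n) ((-1) ^+ t h : R) * \prod_(h < n) (-1) ^+ (~~ t h)
    = (-1) ^+ odd n.
  rewrite -big_split signr_odd -[n in RHS]card_ord -prodr_const.
  by apply: eq_bigr => h _; case: (t h); rewrite /= ?mulr1 ?mul1r.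
have prod_sq : \prod_(h < n) ((-1) ^+ t h : R) * \prod_(h < n) (-1) ^+ t h = 1.
  by rewrite -big_split big1 // => h _ /=; rewrite -signr_addb addbb.
split=> [eq_prod | even_n].
  move: prod_all; rewrite eq_prod prod_sq; case: (odd n) => // /esym.
  by rewrite expr1 => /(congr1 (fun x => 0 <= x)); rewrite ler0N1 ler01.
have := congr1 (fun x => \prod_(h < n) ((-1) ^+ t h : R) * x) prod_all.
by rewrite /= mulrA prod_sq mul1r (negbTE even_n) mulr1.
Qed.

Section ProductOfGhz.

Variables (n : nat) (m : 'I_n -> nat) (u W : 'I_n -> seq bool) (e : bool)
  (s : 'I_n -> bool).
Hypothesis size_u : forall h, size (u h) = m h.
Hypothesis u_neq_negb : forall h, u h != map negb (u h).
Hypothesis W_flip_if : forall h, W h = u h ++ flip_if e (u h).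

Local Notation M := (\sum_(h < n) m h)%N.
Local Notation G := (fun h => ghz (W h) (s h)).

Definition aligned (x : seq bool) :=
  [forall h, (block m x h == u h) || (block m x h == map negb (u h))].

Lemma aligned_map_negb x : aligned x -> aligned (map negb x).
Proof.
move=> /forallP al_x; apply/forallP => h.
by rewrite block_map !eq_map_negb (mapK negbK) orbC.
Qed.

Lemma joint_amp_aligned x c : size x = M -> size c = M -> aligned x ->
  joint_amp m G x c = (sqrtC 2)^-1 ^+ n *
    \prod_(h < n) (-1) ^+ (s h && (block m x h != u h)) * (c == flip_if e x)%:R.
Proof.
move=> size_x size_c /forallP al_x; rewrite /joint_amp /=.
have -> : (sqrtC 2)^-1 ^+ n = \prod_(h < n) (sqrtC 2)^-1 :> algC.
  by rewrite prodr_const card_ord.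
rewrite -(prod_eq_block (m := m)) ?size_flip_if // -!big_split /=.
apply: eq_bigr => h _.
rewrite -/(block m x h) -/(block m c h) block_flip_if W_flip_if.
by rewrite ghz_cat_flip_if ?size_block.
Qed.

Lemma joint_amp_eq0 x c h : size x = M ->
  block m x h != u h -> block m x h != map negb (u h) -> joint_amp m G x c = 0.
Proof.
move=> size_x neq_u neq_nu; rewrite /joint_amp /= (bigD1 h) //=.
by rewrite -/(block m x h) W_flip_if ghz_cat_eq0 ?size_block // mul0r.
Qed.

Lemma block_map_negb_neq x h :
  (block m x h == u h) || (block m x h == map negb (u h)) ->
  (block m (map negb x) h != u h) = (block m x h == u h).
Proof.
rewrite block_map eq_map_negb => /orP[/eqP->|/eqP->].
  by rewrite u_neq_negb eqxx.
by rewrite eqxx eq_map_negb (negbTE (u_neq_negb h)).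
Qed.

Lemma post_state_not_aligned w t c : size w = M -> ~~ aligned w ->
  post_state m G (ghz w t) c = 0.
Proof.
move=> size_w /forallPn[h]; rewrite negb_or => /andP[neq_u neq_nu].
rewrite post_state_ghz // (joint_amp_eq0 _ size_w neq_u neq_nu).
rewrite (@joint_amp_eq0 _ _ h) ?size_map ?block_map ?eq_map_negb ?(mapK negbK) //.
by rewrite !mulr0 addr0 mulr0.
Qed.

Lemma post_state_aligned w t c : size w = M -> size c = M -> aligned w ->
  post_state m G (ghz w t) c = (sqrtC 2)^-1 ^+ n.+1 *
    (\prod_(h < n) (-1) ^+ (s h && (block m w h != u h)) *
       (c == flip_if e w)%:R +
     (-1) ^+ t * \prod_(h < n) (-1) ^+ (s h && (block m w h == u h)) *
       (c == map negb (flip_if e w))%:R).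
Proof.
move=> size_w size_c al_w.
rewrite post_state_ghz // !joint_amp_aligned ?size_map ?aligned_map_negb //.
under [in X in _ * (_ + X)]eq_bigr => h _.
  rewrite block_map_negb_neq; last by move/forallP: al_w.
  over.
by rewrite flip_if_negb exprS; ring.
Qed.

Lemma same_state_post_ghz w t : size w = M -> w != [::] -> aligned w ->
  same_state M (normalize M (post_state m G (ghz w t))) (ghz w t) <->
  \prod_(h < n) ((-1) ^+ (s h && (block m w h != u h)) : algC) =
  \prod_(h < n) (-1) ^+ (s h && (block m w h == u h)).
Proof.
move=> size_w w_neq0 al_w.
set P1 := \prod_(h < n) _; set P2 := \prod_(h < n) _.
have sign_neq0 : (-1) ^+ t != 0 :> algC by rewrite signr_eq0.
rewrite -(same_state_ghz_flip_if _ _ e).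
rewrite (@same_state_two_point_ghz _ _ _ ((sqrtC 2)^-1 ^+ n.+1) P1
  ((-1) ^+ t * P2)).
- by rewrite mulrC; split=> [/(mulIf sign_neq0)->|->].
- by rewrite size_flip_if.
- by apply: map_negb_neq; rewrite -size_eq0 size_flip_if size_eq0.
- by rewrite exprn_gt0 // invr_gt0 sqrtC_gt0 ltr0n.
- exact: (norm_prod_sign _ (fun h => s h && (block m w h != u h))).
- rewrite normrM normrX normrN1 expr1n mul1r.
  exact: (norm_prod_sign _ (fun h => s h && (block m w h == u h))).
- by move=> x; rewrite post_state_aligned ?size_tuple.
Qed.

End ProductOfGhz.

Theorem corollary1 (n : nat) (m : 'I_n -> nat) (i : 'I_n -> seq bool)
    (s : 'I_n -> bool) :
  (2 <= n)%N ->
  (forall h, 1 <= m h)%N ->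
  (forall h, size (i h) = (2 * m h).-1) ->
  ((forall h, take (m h) (false :: i h) = drop (m h) (false :: i h)) \/
   (forall h, take (m h) (false :: i h) = map negb (drop (m h) (false :: i h)))) ->
  forall g : qstate,
  is_ghz_basis_vec (\sum_(h < n) m h) g ->
  norm2 (\sum_(h < n) m h) (post_state m (fun h => ghz (false :: i h) (s h)) g) != 0 ->
  let Gb := normalize (\sum_(h < n) m h)
              (post_state m (fun h => ghz (false :: i h) (s h)) g) in
  ((forall h, s h = false) -> same_state (\sum_(h < n) m h) Gb g) /\
  ((forall h, s h = true) -> (same_state (\sum_(h < n) m h) Gb g <-> ~~ odd n)).
Proof.
move=> n_ge2 m_gt0 size_i halves g [b [t ->]] post_neq0 Gb.
set u := fun h => take (m h) (false :: i h).
have size_u h : size (u h) = m h.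
  by rewrite size_takel //= size_i prednK ?muln_gt0 ?m_gt0 // leq_pmull.
have u_neq_negb h : u h != map negb (u h).
  by apply: map_negb_neq; rewrite -size_eq0 size_u -lt0n.
have [e W_flip_if] : exists e, forall h, false :: i h = u h ++ flip_if e (u h).
  case: halves => halves; [exists false | exists true] => h;
    rewrite -[LHS](cat_take_drop (m h)) -/(u h); congr (_ ++ _).
    by rewrite /u halves.
  by rewrite /u /= halves (mapK negbK).
have M_gt0 : (0 < \sum_(h < n) m h)%N.
  by rewrite (bigD1 (Ordinal (ltnW n_ge2))) //= addn_gt0 m_gt0.
have size_w : size (false :: b) = (\sum_(h < n) m h)%N.
  by rewrite /= size_tuple prednK.
have al_w : aligned m u (false :: b).
  apply: contraTT post_neq0 => not_al; rewrite negbK /norm2 big1 // => x _.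
  rewrite (post_state_not_aligned s size_u u_neq_negb W_flip_if) //.
  by rewrite normr0 expr0n.
rewrite /Gb (same_state_post_ghz s size_u u_neq_negb W_flip_if) //.
split=> s_all; first by rewrite !big1 // => h _; rewrite s_all.
under eq_bigr do rewrite s_all /=; under [RHS]eq_bigr do rewrite s_all /=.
exact: prod_sign_negb_eq.
Qed.
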